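(* Let $n>1$ and let $\varphi:\mathcal A\to\mathcal A$ be a continuous, multiplicative (i.e. $\varphi(AB)=\varphi(A)\varphi(B)$), norm preserving (i.e. $\|\varphi(A)\|=\|A\|$) map, not assumed linear, such that $\varphi(S)=S$. Then $\varphi$ is either homogeneous, i.e. $\varphi(\alpha A)=\alpha\varphi(A)$ for all $\alpha\in\mathbb C$, $A\in\mathcal A$, or skew-homogeneous, i.e. $\varphi(\alpha A)=\overline{\alpha}\varphi(A)$ for all $\alpha\in\mathbb C$, $A\in\mathcal A$.
   Context: $S$ denotes the $n\times n$ nilpotent Jordan block with ones on the superdiagonal and zeros elsewhere. $\mathcal A=\{f(S): f\text{ a complex polynomial}\}$ is the algebra of $n\times n$ upper-triangular Toeplitz matrices. $\|\cdot\|$ is the operator norm on $M_n(\mathbb C)$ induced by the Euclidean norm on $\mathbb C^n$. *)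

From Stdlib Require Import Reals Lra Arith ClassicalEpsilon.
Open Scope R_scope.

Definition Cx : Type := (R * R)%type.
Definition C0 : Cx := (0, 0).
Definition C1 : Cx := (1, 0).
Definition Cadd (z w : Cx) : Cx := (fst z + fst w, snd z + snd w).
Definition Copp (z : Cx) : Cx := (- fst z, - snd z).
Definition Cmul (z w : Cx) : Cx :=
  (fst z * fst w - snd z * snd w, fst z * snd w + snd z * fst w).
Definition Cconj (z : Cx) : Cx := (fst z, - snd z).
Definition Cnorm2 (z : Cx) : R := fst z * fst z + snd z * snd z.

Fixpoint Csum (m : nat) (f : nat -> Cx) : Cx :=
  match m with O => C0 | S m' => Cadd (Csum m' f) (f m') end.
Fixpoint Rsum (m : nat) (f : nat -> R) : R :=
  match m with O => 0 | S m' => Rsum m' f + f m' end.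

(** n x n complex matrices, represented as functions nat -> nat -> Cx that
    vanish outside the index range {0..n-1}^2 (all operations below keep
    this invariant, so Leibniz equality is matrix equality). *)
Definition Mat : Type := nat -> nat -> Cx.
Definition inrange (n i j : nat) : bool := (Nat.ltb i n && Nat.ltb j n)%bool.

Definition mmul (n : nat) (A B : Mat) : Mat :=
  fun i j => if inrange n i j then Csum n (fun k => Cmul (A i k) (B k j)) else C0.
Definition madd (n : nat) (A B : Mat) : Mat :=
  fun i j => if inrange n i j then Cadd (A i j) (B i j) else C0.
Definition msub (n : nat) (A B : Mat) : Mat :=
  fun i j => if inrange n i j then Cadd (A i j) (Copp (B i j)) else C0.
Definition mscale (n : nat) (a : Cx) (A : Mat) : Mat :=
  fun i j => if inrange n i j then Cmul a (A i j) else C0.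
Definition mzero : Mat := fun _ _ => C0.
Definition mid (n : nat) : Mat :=
  fun i j => if inrange n i j then (if Nat.eqb i j then C1 else C0) else C0.

Definition Smat (n : nat) : Mat :=
  fun i j => if inrange n i j then (if Nat.eqb j (S i) then C1 else C0) else C0.

Fixpoint mpow (n : nat) (A : Mat) (k : nat) : Mat :=
  match k with O => mid n | S k' => mmul n A (mpow n A k') end.

(** f(S) for the complex polynomial f with coefficient list c (c_0 + c_1 X + ...) *)
Fixpoint poly_at_S (n : nat) (c : list Cx) (k : nat) : Mat :=
  match c with
  | nil => mzero
  | cons a c' => madd n (mscale n a (mpow n (Smat n) k)) (poly_at_S n c' (S k))
  end.

Definition inA (n : nat) (M : Mat) : Prop := exists c : list Cx, M = poly_at_S n c 0.

Definition vnorm (n : nat) (x : nat -> Cx) : R := sqrt (Rsum n (fun i => Cnorm2 (x i))).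
Definition mapply (n : nat) (A : Mat) (x : nat -> Cx) : nat -> Cx :=
  fun i => Csum n (fun k => Cmul (A i k) (x k)).
Definition opnorm (n : nat) (A : Mat) : R :=
  epsilon (inhabits 0)
    (fun r => is_lub (fun y => exists x, vnorm n x <= 1 /\ y = vnorm n (mapply n A x)) r).

(* Write E = S^(n-1) for the corner matrix.  Since phi fixes S it fixes E, so
   phi(aE) = lam(a) E, where lam(a) is the diagonal of phi(aI); lam is multiplicative,
   lam(1) = 1 and |lam(a)| <= |a| by norm preservation.  Since (I + uE) S = S, also
   phi(I + uE) = I + del(u) E with del additive.  Continuity of phi at zE, along
   (1/k)I + zE = ((1/k)I)(I + kzE), gives del(z) = del(1) lam(z); hence lam is additive as
   well, i.e. a contractive field endomorphism of C, so the identity or conjugation.  Then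
   |lam(a)| = |a| forces phi(aI) = lam(a) I, and phi(aA) = phi(aI) phi(A). *)

From Stdlib Require Import Reals Lra Lia ClassicalEpsilon FunctionalExtensionality List.
From Coquelicot Require Complex.
Open Scope R_scope.

Notation Cmod := Complex.Cmod.

Lemma Cx_eq (z w : Cx) : fst z = fst w -> snd z = snd w -> z = w.
Proof. destruct z, w; simpl; intros; subst; reflexivity. Qed.

Ltac cring := apply Cx_eq; unfold Cmul, Cadd, Copp, C0, C1, Cconj; simpl; ring.

Ltac case_nat := repeat match goal with
  | |- context [Nat.eqb ?a ?b] => destruct (Nat.eqb_spec a b)
  | |- context [Nat.ltb ?a ?b] => destruct (Nat.ltb_spec a b)
  | |- context [Nat.leb ?a ?b] => destruct (Nat.leb_spec a b)
  end; simpl in *; try lia; try reflexivity.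

Lemma Cmod_Cnorm2 z : Cmod z = sqrt (Cnorm2 z).
Proof. unfold Complex.Cmod, Cnorm2. f_equal. ring. Qed.

Lemma Cnorm2_ge0 z : 0 <= Cnorm2 z.
Proof. unfold Cnorm2; nra. Qed.

Lemma Cmod_sqr z : Cmod z * Cmod z = Cnorm2 z.
Proof. rewrite Cmod_Cnorm2. apply sqrt_sqrt, Cnorm2_ge0. Qed.

Lemma Cnorm2_le z w : Cmod z <= Cmod w -> Cnorm2 z <= Cnorm2 w.
Proof. rewrite !Cmod_Cnorm2. intros H. apply sqrt_le_0; auto using Cnorm2_ge0. Qed.

Lemma Cmod_Cmul a b : Cmod (Cmul a b) = Cmod a * Cmod b.
Proof. exact (Complex.Cmod_mult a b). Qed.

Lemma Cmod_Cadd a b : Cmod (Cadd a b) <= Cmod a + Cmod b.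
Proof. exact (Complex.Cmod_triangle a b). Qed.

Lemma Cmod_Copp a : Cmod (Copp a) = Cmod a.
Proof. exact (Complex.Cmod_opp a). Qed.

Lemma Cmod_C0 : Cmod C0 = 0.
Proof. exact Complex.Cmod_0. Qed.

Lemma Cmod_C1 : Cmod C1 = 1.
Proof. exact Complex.Cmod_1. Qed.

Lemma Cmod_eq0 z : Cmod z = 0 -> z = C0.
Proof. exact (Complex.Cmod_eq_0 z). Qed.

Lemma Cnorm2_eq0 z : Cnorm2 z = 0 -> z = C0.
Proof. destruct z as [a b]. unfold Cnorm2; simpl. intros. unfold C0; f_equal; nra. Qed.

Lemma Cmod_real x : 0 <= x -> Cmod (x, 0) = x.
Proof. intros Hx. change (Cmod (Complex.RtoC x) = x). rewrite Complex.Cmod_R. apply Rabs_pos_eq, Hx. Qed.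

Lemma Csub_eq0 w v : Cadd w (Copp v) = C0 -> w = v.
Proof. destruct w, v. unfold Cadd, Copp, C0; simpl. intros H; injection H; intros; f_equal; lra. Qed.

Lemma Cadd_idem_eq0 z : Cadd z z = z -> z = C0.
Proof. destruct z. unfold Cadd, C0; simpl. intros H; injection H; intros; f_equal; lra. Qed.

Lemma Cmul_cancel c x y : c <> C0 -> Cmul c x = Cmul c y -> x = y.
Proof.
  intros Hc Hxy.
  assert (Hd : Cmod (Cmul c (Cadd x (Copp y))) = 0).
  { replace (Cmul c (Cadd x (Copp y))) with (Cadd (Cmul c x) (Copp (Cmul c y))) by cring.
    rewrite Hxy. replace (Cadd (Cmul c y) (Copp (Cmul c y))) with C0 by cring.
    exact Cmod_C0. }
  rewrite Cmod_Cmul in Hd. apply Rmult_integral in Hd as [Hd | Hd].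
  - exfalso. apply Hc, Cmod_eq0, Hd.
  - apply Csub_eq0, Cmod_eq0, Hd.
Qed.

Lemma proportional_of_common_approx w l c :
  (forall eta, 0 < eta -> exists r,
     Cmod (Cadd (Cmul r w) (Copp l)) <= eta /\ Cmod (Cadd (Cmul r c) (Copp C1)) <= eta) ->
  c <> C0 /\ w = Cmul c l.
Proof.
  intros Happrox. split.
  - intros ->. destruct (Happrox (1/2) ltac:(lra)) as [r [_ H]].
    replace (Cadd (Cmul r C0) (Copp C1)) with (Copp C1) in H by cring.
    rewrite Cmod_Copp, Cmod_C1 in H. lra.
  - assert (Hd : Cmod (Cadd w (Copp (Cmul c l))) <= 0).
    { apply Rle_plus_epsilon. intros eps Heps.
      pose proof (Complex.Cmod_ge_0 w) as Hw; pose proof (Complex.Cmod_ge_0 c) as Hc.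
      set (eta := eps / (Cmod w + Cmod c + 1)).
      assert (Heta : (Cmod w + Cmod c) * eta <= eps).
      { unfold eta. apply (Rmult_le_reg_r (Cmod w + Cmod c + 1)); [lra|].
        field_simplify; nra. }
      destruct (Happrox eta ltac:(unfold eta; apply Rdiv_lt_0_compat; lra)) as [r [H1 H2]].
      replace (Cadd w (Copp (Cmul c l))) with
        (Cadd (Cmul w (Copp (Cadd (Cmul r c) (Copp C1)))) (Cmul c (Cadd (Cmul r w) (Copp l))))
        by cring.
      eapply Rle_trans; [apply Cmod_Cadd|]. rewrite !Cmod_Cmul, Cmod_Copp. nra. }
    pose proof (Complex.Cmod_ge_0 (Cadd w (Copp (Cmul c l)))).
    apply Csub_eq0, Cmod_eq0. lra.
Qed.

Lemma nonneg_of_nat_lower_bound c d : (forall k, c <= INR k * d) -> 0 <= d.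
Proof.
  intros H. destruct (Rle_lt_dec 0 d) as [|Hd]; auto. exfalso.
  destruct (INR_unbounded (c / d)) as [k Hk]. specialize (H k).
  assert (c / d * d = c) by (field; lra). nra.
Qed.

Section BoundedFieldEndomorphism.

Variable L : Cx -> Cx.
Hypothesis L_add : forall z w, L (Cadd z w) = Cadd (L z) (L w).
Hypothesis L_mul : forall z w, L (Cmul z w) = Cmul (L z) (L w).
Hypothesis L_one : L C1 = C1.
Hypothesis L_contraction : forall z, Cmod (L z) <= Cmod z.

Lemma L_zero : L C0 = C0.
Proof.
  apply Cadd_idem_eq0. rewrite <- L_add. f_equal. cring.
Qed.

Lemma L_opp z : L (Copp z) = Copp (L z).
Proof.
  assert (H : Cadd (L z) (L (Copp z)) = C0) by (rewrite <- L_add, <- L_zero; f_equal; cring).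
  destruct (L z), (L (Copp z)). unfold Cadd, C0 in H; injection H; intros.
  unfold Copp; simpl; f_equal; lra.
Qed.

Lemma L_nat k : L (INR k, 0) = (INR k, 0).
Proof.
  induction k as [|k IH]; [exact L_zero|].
  replace (INR (S k), 0) with (Cadd (INR k, 0) C1) by (rewrite S_INR; cring).
  rewrite L_add, IH, L_one. reflexivity.
Qed.

(* L(x,0) is no farther than (x,0) from any of the fixed points (k,0) and (-k,0), k natural;
   letting k grow pins it to (x,0). *)
Lemma L_real x : L (x, 0) = (x, 0).
Proof.
  destruct (L (x, 0)) as [a b] eqn:Ex.
  assert (Hminus : forall k, a * a + b * b - x * x <= INR k * (2 * (a - x))).
  { intros k. pose proof (Cnorm2_le _ _ (L_contraction (Cadd (x, 0) (Copp (INR k, 0))))) as H.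
    rewrite L_add, L_opp, Ex, L_nat in H. unfold Cnorm2, Cadd, Copp in H; simpl in H. nra. }
  assert (Hplus : forall k, a * a + b * b - x * x <= INR k * (2 * (x - a))).
  { intros k. pose proof (Cnorm2_le _ _ (L_contraction (Cadd (x, 0) (INR k, 0)))) as H.
    rewrite L_add, Ex, L_nat in H. unfold Cnorm2, Cadd in H; simpl in H. nra. }
  apply nonneg_of_nat_lower_bound in Hminus, Hplus as Ha.
  assert (a = x) as -> by lra. specialize (Hplus 0%nat). simpl in Hplus.
  f_equal. nra.
Qed.

Lemma contractive_field_endo_id_or_conj : (forall z, L z = z) \/ (forall z, L z = Cconj z).
Proof.
  destruct (L (0, 1)) as [p q] eqn:Ei.
  assert (Hsq : Cmul (p, q) (p, q) = (-1, 0)).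
  { rewrite <- Ei, <- L_mul. replace (Cmul (0, 1) (0, 1)) with (-1, 0) by cring.
    apply L_real. }
  unfold Cmul in Hsq; simpl in Hsq. injection Hsq as E1 E2.
  assert (p = 0) as -> by nra.
  assert (HL : forall z, L z = (fst z, snd z * q)).
  { intros [a b]. replace (a, b) with (Cadd (a, 0) (Cmul (b, 0) (0, 1))) by cring.
    rewrite L_add, L_mul, !L_real, Ei. cring. }
  assert (q = 1 \/ q = -1) as [-> | ->] by nra; [left | right];
    intros z; rewrite HL; destruct z; cring.
Qed.

End BoundedFieldEndomorphism.

Lemma Csum_ext m f g : (forall l, (l < m)%nat -> f l = g l) -> Csum m f = Csum m g.
Proof. induction m; simpl; intros H; auto. rewrite IHm, H; auto. Qed.

Lemma Csum_C0 m : Csum m (fun _ => C0) = C0.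
Proof. induction m; simpl; auto. rewrite IHm; cring. Qed.

Lemma Csum_add m f g : Csum m (fun l => Cadd (f l) (g l)) = Cadd (Csum m f) (Csum m g).
Proof. induction m; simpl; [cring|]. rewrite IHm; cring. Qed.

Lemma Csum_scale m a f : Csum m (fun l => Cmul a (f l)) = Cmul a (Csum m f).
Proof. induction m; simpl; [cring|]. rewrite IHm; cring. Qed.

Lemma Csum_unit m p x : Csum m (fun l => if l =? p then x else C0) = if p <? m then x else C0.
Proof. induction m; simpl; [case_nat|]. rewrite IHm. case_nat; subst; cring. Qed.

Lemma Csum_split a b f : Csum (a + b) f = Cadd (Csum a f) (Csum b (fun l => f (a + l)%nat)).
Proof.
  induction b as [|b IH]; simpl; rewrite ?Nat.add_0_r; [cring|].
  rewrite Nat.add_succ_r. simpl. rewrite IH. cring.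
Qed.

Lemma Csum_rev m f : Csum m f = Csum m (fun l => f (m - S l)%nat).
Proof.
  revert f; induction m as [|m IH]; intros f; auto.
  rewrite (Csum_split 1 m), IH. simpl. rewrite Nat.sub_diag.
  rewrite (Csum_ext m _ (fun l => f (m - l)%nat)); [cring|]. intros l Hl. f_equal. lia.
Qed.

Lemma Csum_window n i d h :
  (i + d < n)%nat -> (forall l, (l < n)%nat -> (l < i \/ i + d < l)%nat -> h l = C0) ->
  Csum n h = Csum (S d) (fun l => h (i + l)%nat).
Proof.
  intros Hn Hout. replace n with (i + S d + (n - S (i + d)))%nat by lia.
  rewrite !Csum_split, (Csum_ext i h (fun _ => C0)), Csum_C0 by (intros; apply Hout; lia).
  rewrite (Csum_ext (n - _) _ (fun _ => C0)), Csum_C0 by (intros; apply Hout; lia).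
  cring.
Qed.

Lemma Rsum_ext m f g : (forall l, (l < m)%nat -> f l = g l) -> Rsum m f = Rsum m g.
Proof. induction m; simpl; intros H; auto. rewrite IHm, H; auto. Qed.

Lemma Rsum_le m f g : (forall l, (l < m)%nat -> f l <= g l) -> Rsum m f <= Rsum m g.
Proof.
  induction m; simpl; intros H; [lra|].
  pose proof (IHm (fun l Hl => H l ltac:(lia))). pose proof (H m ltac:(lia)). lra.
Qed.

Lemma Rsum_nonneg m f : (forall l, (l < m)%nat -> 0 <= f l) -> 0 <= Rsum m f.
Proof.
  induction m; simpl; intros H; [lra|].
  pose proof (IHm (fun l Hl => H l ltac:(lia))). pose proof (H m ltac:(lia)). lra.
Qed.

Lemma Rsum_term_le m f k : (forall l, (l < m)%nat -> 0 <= f l) -> (k < m)%nat -> f k <= Rsum m f.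
Proof.
  induction m; simpl; intros H Hk; [lia|].
  pose proof (Rsum_nonneg m f (fun l Hl => H l ltac:(lia))).
  destruct (Nat.eq_dec k m) as [->|]; [lra|].
  pose proof (IHm (fun l Hl => H l ltac:(lia)) ltac:(lia)). pose proof (H m ltac:(lia)). lra.
Qed.

Lemma Rsum_le_last_eq0 m f : (forall l, (l <= m)%nat -> 0 <= f l) ->
  Rsum (S m) f <= f m -> forall l, (l < m)%nat -> f l = 0.
Proof.
  simpl. intros H Hle l Hl.
  pose proof (Rsum_term_le m f l (fun k Hk => H k ltac:(lia)) Hl). pose proof (H l ltac:(lia)). lra.
Qed.

Lemma Rsum_scale m c f : Rsum m (fun i => c * f i) = c * Rsum m f.
Proof. induction m; simpl; [ring|]. rewrite IHm; ring. Qed.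

Lemma Rsum_unit m p x : Rsum m (fun l => if l =? p then x else 0) = if p <? m then x else 0.
Proof. induction m; simpl; [case_nat|]. rewrite IHm. case_nat; subst; lra. Qed.

Lemma Cmod_Csum m f : Cmod (Csum m f) <= Rsum m (fun l => Cmod (f l)).
Proof.
  induction m; simpl; [rewrite Cmod_C0; lra|].
  eapply Rle_trans; [apply Cmod_Cadd|]. lra.
Qed.

(** * Upper triangular Toeplitz matrices *)

Definition toep (n : nat) (f : nat -> Cx) : Mat :=
  fun i j => if inrange n i j then (if i <=? j then f (j - i)%nat else C0) else C0.
Definition unit_seq (k m : nat) : Cx := if m =? k then C1 else C0.
Definition conv (f g : nat -> Cx) (m : nat) : Cx :=
  Csum (S m) (fun l => Cmul (f l) (g (m - l)%nat)).

Lemma toep_ext n f g : (forall m, (m < n)%nat -> f m = g m) -> toep n f = toep n g.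
Proof.
  intros H; extensionality i; extensionality j; unfold toep, inrange; case_nat. apply H; lia.
Qed.

Lemma toep_entry n f i j : (i < n)%nat -> (j < n)%nat -> (i <= j)%nat -> toep n f i j = f (j - i)%nat.
Proof. intros; unfold toep, inrange; case_nat. Qed.

Lemma toep_mul n f g : mmul n (toep n f) (toep n g) = toep n (conv f g).
Proof.
  extensionality i; extensionality j. unfold mmul, toep at 3, inrange.
  destruct (Nat.ltb_spec i n), (Nat.ltb_spec j n); simpl; try reflexivity.
  destruct (Nat.leb_spec i j).
  - unfold conv. rewrite (Csum_window n i (j - i)) by
      (try lia; intros l Hl Hout; unfold toep, inrange; case_nat; cring).
    apply Csum_ext. intros l Hl. unfold toep, inrange. case_nat. f_equal; f_equal; lia.
  - rewrite <- (Csum_C0 n). apply Csum_ext. intros l Hl. unfold toep, inrange. case_nat; cring.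
Qed.

Lemma conv_comm f g m : conv f g m = conv g f m.
Proof.
  unfold conv. rewrite Csum_rev. apply Csum_ext. intros l Hl.
  replace (m - (S m - S l))%nat with l by lia. cring.
Qed.

Lemma conv_add_r f g h m :
  conv f (fun p => Cadd (g p) (h p)) m = Cadd (conv f g m) (conv f h m).
Proof.
  unfold conv. rewrite <- Csum_add. apply Csum_ext. intros. cring.
Qed.

Lemma conv_scale_r f a g m : conv f (fun p => Cmul a (g p)) m = Cmul a (conv f g m).
Proof.
  unfold conv. rewrite <- Csum_scale. apply Csum_ext. intros. cring.
Qed.

Lemma conv_unit_r f k m : conv f (unit_seq k) m = if k <=? m then f (m - k)%nat else C0.
Proof.
  unfold conv. rewrite (Csum_ext _ _ (fun l => if l =? (m - k)%nat then
     (if k <=? m then f (m - k)%nat else C0) else C0)).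
  - rewrite Csum_unit. case_nat.
  - intros l Hl. unfold unit_seq. case_nat; try cring.
    replace l with (m - k)%nat by lia. cring.
Qed.

Lemma madd_toep n f g : madd n (toep n f) (toep n g) = toep n (fun m => Cadd (f m) (g m)).
Proof. extensionality i; extensionality j; unfold madd, toep, inrange; case_nat; cring. Qed.

Lemma msub_toep n f g :
  msub n (toep n f) (toep n g) = toep n (fun m => Cadd (f m) (Copp (g m))).
Proof. extensionality i; extensionality j; unfold msub, toep, inrange; case_nat; cring. Qed.

Lemma mscale_toep n a f : mscale n a (toep n f) = toep n (fun m => Cmul a (f m)).
Proof. extensionality i; extensionality j; unfold mscale, toep, inrange; case_nat; cring. Qed.

Lemma mid_toep n : mid n = toep n (unit_seq 0).
Proof. extensionality i; extensionality j; unfold mid, toep, unit_seq, inrange; case_nat. Qed.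

Lemma Smat_toep n : Smat n = toep n (unit_seq 1).
Proof. extensionality i; extensionality j; unfold Smat, toep, unit_seq, inrange; case_nat. Qed.

Lemma mpow_Smat n k : mpow n (Smat n) k = toep n (unit_seq k).
Proof.
  induction k as [|k IH]; simpl; [apply mid_toep|].
  rewrite IH, Smat_toep, toep_mul. apply toep_ext. intros m Hm.
  rewrite conv_comm, conv_unit_r. unfold unit_seq. case_nat.
Qed.

Lemma poly_at_S_toep n c k :
  poly_at_S n c k = toep n (fun m => if k <=? m then nth (m - k) c C0 else C0).
Proof.
  revert k; induction c as [|a c IH]; intros k; simpl.
  - extensionality i; extensionality j; unfold mzero, toep, inrange.
    case_nat; destruct (j - i - k)%nat; reflexivity.
  - rewrite IH, mpow_Smat, mscale_toep, madd_toep. apply toep_ext. intros m Hm.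
    unfold unit_seq. case_nat; subst; try cring.
    + rewrite Nat.sub_diag. cring.
    + replace (m - k)%nat with (S (m - S k)) by lia. cring.
Qed.

Lemma inA_toep n f : inA n (toep n f).
Proof.
  exists (map f (seq 0 n)). rewrite poly_at_S_toep. apply toep_ext. intros m Hm.
  rewrite Nat.sub_0_r, nth_indep with (d' := f 0%nat) by (rewrite length_map, length_seq; lia).
  rewrite map_nth, seq_nth by lia. reflexivity.
Qed.

Lemma toep_of_inA n X : inA n X -> X = toep n (X 0%nat).
Proof.
  intros [c ->]. rewrite !poly_at_S_toep. apply toep_ext. intros m Hm.
  rewrite toep_entry by lia. rewrite !Nat.sub_0_r. reflexivity.
Qed.

Definition corner (n : nat) : Mat := toep n (unit_seq (n - 1)).
Definition unip (n : nat) (u : Cx) : Mat := madd n (mid n) (mscale n u (corner n)).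

Lemma unip_toep n u :
  unip n u = toep n (fun m => Cadd (unit_seq 0 m) (Cmul u (unit_seq (n - 1) m))).
Proof. unfold unip, corner. rewrite mid_toep, mscale_toep, madd_toep. reflexivity. Qed.

Ltac toep_form :=
  unfold corner; rewrite ?unip_toep, ?mid_toep, ?Smat_toep, ?mscale_toep, ?madd_toep, ?msub_toep.

Lemma inA_scalar n a : inA n (mscale n a (mid n)).
Proof. toep_form. apply inA_toep. Qed.

Lemma inA_corner n c : inA n (mscale n c (corner n)).
Proof. toep_form. apply inA_toep. Qed.

Lemma inA_unip n u : inA n (unip n u).
Proof. toep_form. apply inA_toep. Qed.

Lemma inA_mmul n A B : inA n A -> inA n B -> inA n (mmul n A B).
Proof. intros HA HB. rewrite (toep_of_inA n A), (toep_of_inA n B), toep_mul by auto. apply inA_toep. Qed.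

Lemma scalar_mul_toep n a f : mmul n (mscale n a (mid n)) (toep n f) = mscale n a (toep n f).
Proof.
  toep_form. rewrite toep_mul. apply toep_ext. intros m Hm.
  rewrite conv_comm, conv_scale_r, conv_unit_r. case_nat. rewrite Nat.sub_0_r. reflexivity.
Qed.

Lemma toep_mul_Smat n f :
  mmul n (toep n f) (Smat n) = toep n (fun m => if 1 <=? m then f (m - 1)%nat else C0).
Proof. toep_form. rewrite toep_mul. apply toep_ext. intros m Hm. apply conv_unit_r. Qed.

Lemma toep_mul_corner n f : mmul n (toep n f) (corner n) = mscale n (f 0%nat) (corner n).
Proof.
  toep_form. rewrite toep_mul. apply toep_ext. intros m Hm.
  rewrite conv_unit_r. unfold unit_seq. case_nat; try cring.
  replace (m - (n - 1))%nat with 0%nat by lia. cring.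
Qed.

Lemma toep_mul_unip n u f :
  mmul n (toep n f) (unip n u) = madd n (toep n f) (mscale n (Cmul u (f 0%nat)) (corner n)).
Proof.
  toep_form. rewrite toep_mul. apply toep_ext. intros m Hm.
  rewrite conv_add_r, conv_scale_r, !conv_unit_r. unfold unit_seq. case_nat; rewrite ?Nat.sub_0_r.
  - replace (m - (n - 1))%nat with 0%nat by lia. cring.
  - cring.
Qed.

Lemma unip_mul n u v : (1 < n)%nat -> mmul n (unip n u) (unip n v) = unip n (Cadd u v).
Proof.
  intros Hn. rewrite (unip_toep n u), toep_mul_unip. toep_form.
  apply toep_ext. intros m Hm. unfold unit_seq. case_nat; cring.
Qed.

Lemma unip_mul_Smat n u : mmul n (unip n u) (Smat n) = Smat n.
Proof.
  rewrite unip_toep, toep_mul_Smat. toep_form.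
  apply toep_ext. intros m Hm. unfold unit_seq. case_nat; cring.
Qed.

Lemma corner_entry n c : (1 < n)%nat -> mscale n c (corner n) 0%nat (n - 1)%nat = c.
Proof. intros Hn. toep_form. rewrite toep_entry by lia. unfold unit_seq. case_nat. cring. Qed.

Lemma unip_entry n u : (1 < n)%nat -> unip n u 0%nat (n - 1)%nat = u.
Proof. intros Hn. toep_form. rewrite toep_entry by lia. unfold unit_seq. case_nat. cring. Qed.

Lemma vnorm_entry_le n x k : (k < n)%nat -> Cmod (x k) <= vnorm n x.
Proof.
  intros Hk. rewrite Cmod_Cnorm2. apply sqrt_le_1_alt.
  apply (Rsum_term_le n (fun i => Cnorm2 (x i))); auto using Cnorm2_ge0.
Qed.

Lemma vnorm_unit_ball_bounded n X :
  bound (fun y => exists x, vnorm n x <= 1 /\ y = vnorm n (mapply n X x)).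
Proof.
  set (row := fun i => Rsum n (fun k => Cmod (X i k))).
  exists (sqrt (Rsum n (fun i => row i * row i))).
  intros y [x [Hx ->]]. apply sqrt_le_1_alt, Rsum_le. intros i Hi.
  unfold mapply. rewrite <- Cmod_sqr.
  assert (Hrow : Cmod (Csum n (fun k => Cmul (X i k) (x k))) <= row i).
  { eapply Rle_trans; [apply Cmod_Csum|]. apply Rsum_le. intros l Hl. rewrite Cmod_Cmul.
    pose proof (vnorm_entry_le n x l Hl).
    pose proof (Complex.Cmod_ge_0 (X i l)). pose proof (Complex.Cmod_ge_0 (x l)). nra. }
  pose proof (Complex.Cmod_ge_0 (Csum n (fun k => Cmul (X i k) (x k)))). nra.
Qed.

Lemma opnorm_is_lub n X :
  is_lub (fun y => exists x, vnorm n x <= 1 /\ y = vnorm n (mapply n X x)) (opnorm n X).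
Proof.
  unfold opnorm. apply epsilon_spec.
  destruct (completeness _ (vnorm_unit_ball_bounded n X)) as [m Hm]; [|exists m; exact Hm].
  exists (vnorm n (mapply n X (fun _ => C0))), (fun _ => C0). split; auto.
  unfold vnorm. rewrite (Rsum_ext _ _ (fun _ => 0 * 0)), Rsum_scale, Rmult_0_l, sqrt_0; [lra|].
  intros; unfold Cnorm2, C0; simpl; ring.
Qed.

Lemma opnorm_ge n X x : vnorm n x <= 1 -> vnorm n (mapply n X x) <= opnorm n X.
Proof. intros H. apply (proj1 (opnorm_is_lub n X)). exists x; auto. Qed.

Lemma opnorm_le n X r :
  (forall x, vnorm n x <= 1 -> vnorm n (mapply n X x) <= r) -> opnorm n X <= r.
Proof. intros H. apply (proj2 (opnorm_is_lub n X)). intros y [x [Hx ->]]. auto. Qed.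

Lemma opnorm_col_ge n X j : (j < n)%nat -> sqrt (Rsum n (fun i => Cnorm2 (X i j))) <= opnorm n X.
Proof.
  intros Hj. set (e := fun k => if k =? j then C1 else C0).
  assert (He : vnorm n e <= 1).
  { unfold vnorm. rewrite (Rsum_ext _ _ (fun l => if l =? j then 1 else 0)).
    - rewrite Rsum_unit. case_nat. rewrite sqrt_1; lra.
    - intros l Hl; unfold e, Cnorm2, C1, C0; case_nat; ring. }
  eapply Rle_trans; [|apply (opnorm_ge n X e He)]. unfold vnorm.
  right. f_equal. apply Rsum_ext. intros i Hi. unfold mapply. f_equal.
  rewrite (Csum_ext _ _ (fun k => if k =? j then X i j else C0)).
  - rewrite Csum_unit; case_nat.
  - intros k Hk; unfold e; case_nat; subst; cring.
Qed.

Lemma opnorm_entry_ge n X i j : (i < n)%nat -> (j < n)%nat -> Cmod (X i j) <= opnorm n X.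
Proof.
  intros Hi Hj. eapply Rle_trans; [|apply (opnorm_col_ge n X j Hj)].
  rewrite Cmod_Cnorm2. apply sqrt_le_1_alt, (Rsum_term_le n (fun i => Cnorm2 (X i j)));
    auto using Cnorm2_ge0.
Qed.

Lemma opnorm_scalar_le n a : opnorm n (mscale n a (mid n)) <= Cmod a.
Proof.
  apply opnorm_le. intros x Hx. unfold vnorm in *.
  assert (Hx1 : Rsum n (fun i => Cnorm2 (x i)) <= 1).
  { rewrite <- sqrt_1 in Hx. apply sqrt_le_0 in Hx; auto using Rle_0_1.
    apply Rsum_nonneg; auto using Cnorm2_ge0. }
  rewrite (Rsum_ext _ _ (fun i => Cnorm2 a * Cnorm2 (x i))).
  - rewrite Rsum_scale, Cmod_Cnorm2. apply sqrt_le_1_alt.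
    pose proof (Cnorm2_ge0 a). nra.
  - intros i Hi. unfold mapply.
    rewrite (Csum_ext _ _ (fun k => if k =? i then Cmul a (x i) else C0)).
    + rewrite Csum_unit; case_nat. unfold Cnorm2, Cmul; simpl; ring.
    + intros k Hk; unfold mscale, mid, inrange; case_nat; subst; cring.
Qed.

(** * Multiplicative isometries of the Toeplitz algebra *)

Section MultiplicativeIsometry.

Variable n : nat.
Variable phi : Mat -> Mat.
Hypothesis n_gt1 : (1 < n)%nat.
Hypothesis phi_inA : forall A, inA n A -> inA n (phi A).
Hypothesis phi_cont : forall A, inA n A -> forall eps, 0 < eps -> exists delta, 0 < delta /\
  forall B, inA n B -> opnorm n (msub n B A) < delta -> opnorm n (msub n (phi B) (phi A)) < eps.
Hypothesis phi_mul : forall A B, inA n A -> inA n B -> phi (mmul n A B) = mmul n (phi A) (phi B).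
Hypothesis phi_norm : forall A, inA n A -> opnorm n (phi A) = opnorm n A.
Hypothesis phi_Smat : phi (Smat n) = Smat n.

Definition lam (a : Cx) : Cx := phi (mscale n a (mid n)) 0%nat 0%nat.
Definition del (u : Cx) : Cx := phi (unip n u) 0%nat (n - 1)%nat.

Lemma phi_toep A : inA n A -> phi A = toep n (phi A 0%nat).
Proof. intros HA. apply toep_of_inA, phi_inA, HA. Qed.

Lemma phi_Smat_pow k : phi (mpow n (Smat n) (S k)) = mpow n (Smat n) (S k).
Proof.
  induction k as [|k IH].
  - rewrite mpow_Smat, <- Smat_toep. exact phi_Smat.
  - change (mpow n (Smat n) (S (S k))) with (mmul n (Smat n) (mpow n (Smat n) (S k))).
    rewrite phi_mul, phi_Smat, IH; rewrite ?mpow_Smat, ?Smat_toep; auto using inA_toep.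
Qed.

Lemma phi_corner_fixed : phi (corner n) = corner n.
Proof.
  unfold corner. rewrite <- mpow_Smat. replace (n - 1)%nat with (S (n - 2)) by lia.
  apply phi_Smat_pow.
Qed.

Lemma phi_corner c : phi (mscale n c (corner n)) = mscale n (lam c) (corner n).
Proof.
  assert (E : mscale n c (corner n) = mmul n (mscale n c (mid n)) (corner n))
    by (unfold corner; rewrite scalar_mul_toep; reflexivity).
  rewrite E, phi_mul, phi_corner_fixed, (phi_toep (mscale n c (mid n)));
    auto using inA_scalar, inA_corner.
  - apply toep_mul_corner.
  - unfold corner; apply inA_toep.
Qed.

Lemma lam_one : lam C1 = C1.
Proof.
  assert (E : mscale n C1 (corner n) = corner n)
    by (unfold corner; rewrite mscale_toep; apply toep_ext; intros; cring).
  pose proof (phi_corner C1) as H. rewrite E, phi_corner_fixed in H.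
  rewrite <- (corner_entry n (lam C1)), <- H by lia. rewrite <- E. apply corner_entry, n_gt1.
Qed.

Lemma lam_mul a b : lam (Cmul a b) = Cmul (lam a) (lam b).
Proof.
  assert (E : mscale n (Cmul a b) (mid n) = mmul n (mscale n a (mid n)) (mscale n b (mid n))).
  { rewrite (mid_toep n) at 3. rewrite mscale_toep, scalar_mul_toep. toep_form.
    apply toep_ext; intros; cring. }
  unfold lam at 1. rewrite E, phi_mul, (phi_toep (mscale n a (mid n))),
    (phi_toep (mscale n b (mid n))), toep_mul by auto using inA_scalar.
  rewrite toep_entry by lia. unfold conv, lam. simpl. cring.
Qed.

Lemma scalar_entry_le r i j : (i < n)%nat -> (j < n)%nat ->
  Cmod (phi (mscale n r (mid n)) i j) <= Cmod r.
Proof.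
  intros Hi Hj. eapply Rle_trans; [apply (opnorm_entry_ge n); auto|].
  rewrite phi_norm by apply inA_scalar. apply opnorm_scalar_le.
Qed.

Lemma lam_contraction a : Cmod (lam a) <= Cmod a.
Proof. apply scalar_entry_le; lia. Qed.

Lemma phi_unip u : phi (unip n u) = unip n (del u).
Proof.
  assert (HS : mmul n (phi (unip n u)) (Smat n) = Smat n).
  { rewrite <- phi_Smat at 1. rewrite <- phi_mul, unip_mul_Smat; auto using inA_unip.
    rewrite Smat_toep; apply inA_toep. }
  rewrite (phi_toep (unip n u)), toep_mul_Smat, Smat_toep in HS by apply inA_unip.
  assert (Hdiag : forall p, (S p < n)%nat -> phi (unip n u) 0%nat p = unit_seq 0 p).
  { intros p Hp. pose proof (f_equal (fun X => X 0%nat (S p)) HS) as E. simpl in E.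
    rewrite !toep_entry in E by lia. unfold unit_seq in *. revert E; case_nat; now rewrite Nat.sub_0_r. }
  unfold del. rewrite (phi_toep (unip n u)) at 1 by apply inA_unip.
  set (g := phi (unip n u) 0%nat) in *. rewrite unip_toep. apply toep_ext.
  intros m Hm. destruct (Nat.eq_dec m (n - 1)) as [->|].
  - unfold unit_seq. case_nat. cring.
  - rewrite Hdiag by lia. unfold unit_seq. case_nat; cring.
Qed.

Lemma del_add u v : del (Cadd u v) = Cadd (del u) (del v).
Proof.
  assert (E : unip n (del (Cadd u v)) = unip n (Cadd (del u) (del v))).
  { rewrite <- phi_unip, <- unip_mul, phi_mul, !phi_unip by auto using inA_unip.
    apply unip_mul, n_gt1. }
  rewrite <- (unip_entry n (del (Cadd u v))), E by lia. apply unip_entry, n_gt1.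
Qed.

Lemma del_nat k z : del (Cmul (INR k, 0) z) = Cmul (INR k, 0) (del z).
Proof.
  induction k as [|k IH].
  - replace (Cmul (INR 0, 0) z) with C0 by (simpl; cring).
    replace (Cmul (INR 0, 0) (del z)) with C0 by (simpl; cring).
    apply Cadd_idem_eq0. rewrite <- del_add. f_equal. cring.
  - replace (Cmul (INR (S k), 0) z) with (Cadd (Cmul (INR k, 0) z) z) by (rewrite S_INR; cring).
    rewrite del_add, IH, S_INR. cring.
Qed.


Lemma corner_deviation_le r u z :
  Cmod (Cadd (Cmul (lam r) (del u)) (Copp (lam z))) <=
  opnorm n (msub n (phi (mmul n (mscale n r (mid n)) (unip n u))) (phi (mscale n z (corner n))))
  + Cmod r.
Proof.
  pose proof (scalar_entry_le r 0 (n - 1) ltac:(lia) ltac:(lia)) as Hg.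
  rewrite phi_mul, phi_unip, (phi_toep (mscale n r (mid n))), toep_mul_unip, phi_corner
    by auto using inA_scalar, inA_unip.
  change (lam r) with (phi (mscale n r (mid n)) 0%nat 0%nat).
  set (g := phi (mscale n r (mid n)) 0%nat) in *.
  match goal with |- _ <= opnorm n ?X + _ =>
    pose proof (opnorm_entry_ge n X 0 (n - 1) ltac:(lia) ltac:(lia)) as HX;
    replace (X 0%nat (n - 1)%nat) with
      (Cadd (g (n - 1)%nat) (Cadd (Cmul (g 0%nat) (del u)) (Copp (lam z)))) in HX
  end.
  - replace (Cadd (Cmul (g 0%nat) (del u)) (Copp (lam z))) with
      (Cadd (Cadd (g (n - 1)%nat) (Cadd (Cmul (g 0%nat) (del u)) (Copp (lam z))))
        (Copp (g (n - 1)%nat))) by cring.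
    eapply Rle_trans; [apply Cmod_Cadd|]. rewrite Cmod_Copp. lra.
  - toep_form. rewrite toep_entry, Nat.sub_0_r by lia. unfold unit_seq. case_nat. cring.
Qed.


Lemma corner_approx z eps : 0 < eps -> exists N, (0 < N)%nat /\ forall k, (N <= k)%nat ->
  Cmod (Cadd (Cmul (Cmul (lam (/ INR k, 0)) (INR k, 0)) (del z)) (Copp (lam z))) <= eps + / INR k.
Proof.
  intros Heps.
  destruct (phi_cont _ (inA_corner n z) eps Heps) as [delta [Hdelta Hcont]].
  destruct (archimed_cor1 delta Hdelta) as [N [HN HN0]].
  exists N. split; [exact HN0|]. intros k Hk.
  assert (Hk0 : 0 < INR k) by (apply lt_0_INR; lia).
  set (r := (/ INR k, 0)).
  assert (Hr : Cmod r = / INR k) by (apply Cmod_real; left; apply Rinv_0_lt_compat, Hk0).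
  pose proof (corner_deviation_le r (Cmul (INR k, 0) z) z) as Hdev.
  set (B := mmul n (mscale n r (mid n)) (unip n (Cmul (INR k, 0) z))) in Hdev.
  assert (HBz : msub n B (mscale n z (corner n)) = mscale n r (mid n)).
  { unfold B. rewrite unip_toep, scalar_mul_toep. toep_form. apply toep_ext. intros m Hm.
    unfold r, unit_seq. destruct z. case_nat;
      apply Cx_eq; unfold Cmul, Cadd, Copp, C0, C1; simpl; field; lra. }
  assert (HBnear : opnorm n (msub n B (mscale n z (corner n))) < delta).
  { rewrite HBz. eapply Rle_lt_trans; [apply opnorm_scalar_le|]. rewrite Hr.
    eapply Rle_lt_trans; [|exact HN].
    apply Rinv_le_contravar; [apply lt_0_INR; lia | apply le_INR; lia]. }
  specialize (Hcont B (inA_mmul _ _ _ (inA_scalar n r) (inA_unip n _)) HBnear).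
  rewrite del_nat, Hr in Hdev.
  replace (Cmul (Cmul (lam r) (INR k, 0)) (del z)) with (Cmul (lam r) (Cmul (INR k, 0) (del z)))
    by cring.
  lra.
Qed.

Lemma del_eq_lam z : del C1 <> C0 /\ del z = Cmul (del C1) (lam z).
Proof.
  apply proportional_of_common_approx. intros eta Heta.
  destruct (corner_approx z (eta / 2) ltac:(lra)) as [N1 [_ H1]].
  destruct (corner_approx C1 (eta / 2) ltac:(lra)) as [N2 [_ H2]].
  destruct (archimed_cor1 (eta / 2) ltac:(lra)) as [N3 [HN3 HN3pos]].
  set (k := (N1 + N2 + N3)%nat).
  assert (Hk : / INR k <= eta / 2).
  { left. eapply Rle_lt_trans; [|exact HN3].
    apply Rinv_le_contravar; [apply lt_0_INR; lia | apply le_INR; unfold k; lia]. }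
  specialize (H1 k ltac:(unfold k; lia)). specialize (H2 k ltac:(unfold k; lia)).
  rewrite lam_one in H2.
  exists (Cmul (lam (/ INR k, 0)) (INR k, 0)). split; lra.
Qed.

Lemma lam_add z w : lam (Cadd z w) = Cadd (lam z) (lam w).
Proof.
  destruct (del_eq_lam C1) as [Hdel1 _].
  apply (Cmul_cancel (del C1)); auto.
  rewrite <- (proj2 (del_eq_lam (Cadd z w))), del_add, (proj2 (del_eq_lam z)),
    (proj2 (del_eq_lam w)). cring.
Qed.

Lemma lam_id_or_conj : (forall z, lam z = z) \/ (forall z, lam z = Cconj z).
Proof. apply contractive_field_endo_id_or_conj; auto using lam_add, lam_mul, lam_one, lam_contraction. Qed.

Lemma Cmod_lam a : Cmod (lam a) = Cmod a.
Proof.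
  destruct lam_id_or_conj as [H | H]; rewrite H; [reflexivity|]. exact (Complex.Cmod_conj a).
Qed.

(* The last column of phi(aI) has norm at most ||aI|| <= |a| = |lam a|, while its bottom
   entry is already lam a; so every other entry vanishes. *)
Lemma phi_scalar a : phi (mscale n a (mid n)) = mscale n (lam a) (mid n).
Proof.
  set (X := phi (mscale n a (mid n))).
  assert (Hcol : Rsum n (fun i => Cnorm2 (X i (n - 1)%nat)) <= Cnorm2 (X (n - 1)%nat (n - 1)%nat)).
  { assert (Hdiag : X (n - 1)%nat (n - 1)%nat = lam a).
    { unfold X. rewrite phi_toep, toep_entry, Nat.sub_diag by (apply inA_scalar || lia).
      reflexivity. }
    rewrite Hdiag, <- !Cmod_sqr, Cmod_lam.
    apply sqrt_le_0; [apply Rsum_nonneg; auto using Cnorm2_ge0 | nra |].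
    rewrite sqrt_square by apply Complex.Cmod_ge_0.
    eapply Rle_trans; [apply (opnorm_col_ge n X (n - 1)); lia|].
    unfold X. rewrite phi_norm by apply inA_scalar. apply opnorm_scalar_le. }
  replace n with (S (n - 1)) in Hcol at 1 by lia.
  pose proof (Rsum_le_last_eq0 _ _ (fun l _ => Cnorm2_ge0 _) Hcol) as Hzero.
  unfold X. rewrite phi_toep by apply inA_scalar.
  rewrite (mid_toep n) at 2. rewrite mscale_toep. apply toep_ext. intros m Hm.
  destruct m as [|m]; [unfold unit_seq, lam; simpl; cring|].
  specialize (Hzero (n - 1 - S m)%nat ltac:(lia)).
  unfold X in Hzero. rewrite phi_toep, toep_entry in Hzero by (apply inA_scalar || lia).
  replace (n - 1 - (n - 1 - S m))%nat with (S m) in Hzero by lia.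
  apply Cnorm2_eq0 in Hzero. unfold unit_seq. rewrite Hzero. case_nat. cring.
Qed.


Lemma phi_mscale a A : inA n A -> phi (mscale n a A) = mscale n (lam a) (phi A).
Proof.
  intros HA. rewrite (toep_of_inA n A) at 1 by exact HA.
  rewrite <- scalar_mul_toep, <- (toep_of_inA n A), phi_mul, phi_scalar
    by auto using inA_scalar.
  rewrite (phi_toep A) by exact HA. apply scalar_mul_toep.
Qed.

End MultiplicativeIsometry.

Theorem lemma2p4 (n : nat) (phi : Mat -> Mat) :
  (1 < n)%nat ->
  (forall A, inA n A -> inA n (phi A)) ->
  (forall A, inA n A -> forall eps, 0 < eps -> exists delta, 0 < delta /\
     forall B, inA n B -> opnorm n (msub n B A) < delta ->
       opnorm n (msub n (phi B) (phi A)) < eps) ->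
  (forall A B, inA n A -> inA n B -> phi (mmul n A B) = mmul n (phi A) (phi B)) ->
  (forall A, inA n A -> opnorm n (phi A) = opnorm n A) ->
  phi (Smat n) = Smat n ->
  (forall (a : Cx) A, inA n A -> phi (mscale n a A) = mscale n a (phi A)) \/
  (forall (a : Cx) A, inA n A -> phi (mscale n a A) = mscale n (Cconj a) (phi A)).
Proof.
  intros Hn Hin Hcont Hmul Hnorm HS.
  destruct (lam_id_or_conj n phi Hn Hin Hcont Hmul Hnorm HS) as [Hlam | Hlam];
    [left | right]; intros a A HA;
    rewrite (phi_mscale n phi Hn Hin Hcont Hmul Hnorm HS a A HA), Hlam; reflexivity.
Qed.
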